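(* Let $d\ge 1$ and let $\mathcal E$ be the set of finite linear combinations $\sum_{i=1}^n c_i \mathcal E_{\xi_i}$ with $n\in\mathbb N$, $c_i\in\mathbb C$, $\xi_i\in\mathbb C^d$, where $\mathcal E_{\xi}(x)=e^{\langle \xi,x\rangle-\frac12\langle\xi,\xi\rangle}$. Let $u,v>0$ with $\frac1u+\frac1v=1$. Then for all $\varphi,\psi\in\mathcal E$ and all $x\in\mathbb R^d$, $$\Big\{[\Gamma(\sqrt u)\varphi]\big(\tfrac{\cdot}{\sqrt v}\big)e^{-\frac{\langle \cdot,\cdot\rangle}{2v}}\Big\}\star\Big\{[\Gamma(\sqrt v)\psi]\big(\tfrac{\cdot}{\sqrt u}\big)e^{-\frac{\langle \cdot,\cdot\rangle}{2u}}\Big\}(x)=(\varphi\diamond\psi)\Big(\frac{x}{\sqrt{uv}}\Big)e^{-\frac{\langle x,x\rangle}{2uv}}.$$ Consequently (replacing $\varphi,\psi$ by $\Gamma(1/\sqrt u)\varphi$, $\Gamma(1/\sqrt v)\psi$), for all $\varphi,\psi\in\mathcal E$, $$\Big[\varphi\big(\tfrac{\cdot}{\sqrt v}\big)e^{-\frac{\langle \cdot,\cdot\rangle}{2v}}\Big]\star\Big[\psi\big(\tfrac{\cdot}{\sqrt u}\big)e^{-\frac{\langle \cdot,\cdot\rangle}{2u}}\Big](x)=\Big[\Gamma\big(\tfrac{1}{\sqrt u}\big)\varphi\diamond\Gamma\big(\tfrac1{\sqrt v}\big)\psi\Big]\Big(\frac{x}{\sqrt{uv}}\Big)e^{-\frac{\langle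 x,x\rangle}{2uv}}.$$
   Context: $\langle\cdot,\cdot\rangle$ denotes the bilinear (not Hermitian) form $\langle a,b\rangle=\sum_i a_ib_i$ on $\mathbb C^d$. $d_Nx=(2\pi)^{-d/2}dx$ is the normalized Lebesgue measure on $\mathbb R^d$, and $\star$ is convolution with respect to $d_Nx$: $(F\star G)(x)=\int_{\mathbb R^d}F(x-y)G(y)\,d_Ny$. On the span $\mathcal E$ of the exponential functions, the Wick product and second quantization operators are determined by bilinearity/linearity and the rules $\mathcal E_\xi\diamond\mathcal E_\eta=\mathcal E_{\xi+\eta}$ and $\Gamma(c)\mathcal E_\xi=\mathcal E_{c\xi}$ for all $\xi,\eta\in\mathbb C^d$, $c\in\mathbb C$ (these agree with the Gaussian Wick product and second quantization operator $\Gamma(c)\sum_n f_n=\sum_n c^nf_n$ of the chaos decomposition of $L^2(\mathbb R^d,\mu)$, $\mu$ the standard Gaussian measure). *)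

From Stdlib Require Import Reals List.
Open Scope R_scope.

Record C := mkC { Re : R ; Im : R }.
Definition C0 : C := mkC 0 0.
Definition Cofr (r : R) : C := mkC r 0.
Definition Cadd (z w : C) : C := mkC (Re z + Re w) (Im z + Im w).
Definition Cmul (z w : C) : C :=
  mkC (Re z * Re w - Im z * Im w) (Re z * Im w + Im z * Re w).
Definition Cscale (r : R) (z : C) : C := mkC (r * Re z) (r * Im z).
Definition Cexp (z : C) : C :=
  mkC (exp (Re z) * cos (Im z)) (exp (Re z) * sin (Im z)).

(** * Vectors: a point of R^d (resp. C^d) is a map nat -> R (resp. nat -> C);
      only the coordinates 0..d-1 are ever used. *)
Fixpoint Rsum_upto (n : nat) (f : nat -> R) : R :=
  match n with O => 0 | S n => Rsum_upto n f + f n end.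
Fixpoint Csum_upto (n : nat) (f : nat -> C) : C :=
  match n with O => C0 | S n => Cadd (Csum_upto n f) (f n) end.

Definition rdot (d : nat) (x y : nat -> R) : R := Rsum_upto d (fun i => x i * y i).
Definition cdot (d : nat) (a b : nat -> C) : C := Csum_upto d (fun i => Cmul (a i) (b i)).
Definition creal (x : nat -> R) : nat -> C := fun i => Cofr (x i).
Definition vsub (x y : nat -> R) : nat -> R := fun i => x i - y i.
Definition vscale (r : R) (x : nat -> R) : nat -> R := fun i => r * x i.

Definition expo (d : nat) (xi : nat -> C) (x : nat -> R) : C :=
  Cexp (Cadd (cdot d xi (creal x)) (Cscale (-(1/2)) (cdot d xi xi))).

(** * The span E of exponentials: an element sum_i c_i E_{xi_i} is given by
      the list of pairs (c_i, xi_i). *)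
Definition Exps := list (C * (nat -> C)).
Definition evalE (d : nat) (phi : Exps) (x : nat -> R) : C :=
  fold_right (fun p acc => Cadd (Cmul (fst p) (expo d (snd p) x)) acc) C0 phi.
(** second quantization: Gamma(c) E_xi = E_{c xi}, extended linearly *)
Definition GammaE (c : C) (phi : Exps) : Exps :=
  map (fun p => (fst p, fun i => Cmul c (snd p i))) phi.
(** Wick product: E_xi <> E_eta = E_{xi+eta}, extended bilinearly *)
Definition wick (phi psi : Exps) : Exps :=
  flat_map (fun p => map (fun q => (Cmul (fst p) (fst q),
                                    fun i => Cadd (snd p i) (snd q i))) psi) phi.

Definition improper_int (f : R -> R) (l : R) : Prop :=
  (forall a b, inhabited (Riemann_integrable f a b)) /\
  forall eps, eps > 0 -> exists M, M > 0 /\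
    forall a b (pr : Riemann_integrable f a b),
      a <= - M -> M <= b -> Rabs (RiemannInt pr - l) < eps.

Definition improper_intC (g : R -> C) (I : C) : Prop :=
  improper_int (fun t => Re (g t)) (Re I) /\ improper_int (fun t => Im (g t)) (Im I).

Definition upd (y : nat -> R) (k : nat) (t : R) : nat -> R :=
  fun i => if Nat.eqb i k then t else y i.

(** [is_integral_Rd k F I]: the iterated improper Riemann integral of F over
    the coordinates 0..k-1 (Lebesgue measure dy) converges and equals I. *)
Fixpoint is_integral_Rd (k : nat) : ((nat -> R) -> C) -> C -> Prop :=
  match k with
  | O => fun F I => I = F (fun _ => 0)
  | S k => fun F I =>
      exists G : R -> C,
        (forall t, is_integral_Rd k (fun y => F (upd y k t)) (G t)) /\
        improper_intC G I
  end.

(** convolution w.r.t. d_N y = (2 pi)^(-d/2) dy : (F * G)(x) = I *)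
Definition conv_is (d : nat) (F G : (nat -> R) -> C) (x : nat -> R) (I : C) : Prop :=
  exists J, is_integral_Rd d (fun y => Cmul (F (vsub x y)) (G y)) J /\
            I = Cscale ((/ sqrt (2 * PI)) ^ d) J.

Definition dilgauss (d : nat) (f : (nat -> R) -> C) (w : R) : (nat -> R) -> C :=
  fun y => Cmul (f (vscale (/ sqrt w) y)) (Cofr (exp (- rdot d y y / (2 * w)))).

(* Both sides are bilinear in [(phi, psi)], and [Gamma] and the Wick product act on
   exponentials by [xi |-> c xi] and [(xi, eta) |-> xi + eta], so it suffices to take
   [phi = E_xi] and [psi = E_eta].  Since [1/u + 1/v = 1], the quadratic terms in [y] of the
   convolution integrand add up to [-<y,y>/2]; completing the square coordinatewise, the
   integrand is [e^(-y^2/2 + c y)] times a factor independent of [y], with [c] complex, and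
   the complex Gaussian integral [int e^(-t^2/2 + c t) dt = sqrt(2 PI) e^(c^2/2)] gives the
   right-hand side.

   That Gaussian integral is established from scratch: for [c = p + i q], its real and
   imaginary parts satisfy linear differential equations in [q] and in [p] (differentiation
   under the integral sign and integration by parts), which reduce it to
   [int e^(-t^2/2) dt = sqrt(2 PI)], obtained by the classical arctangent-kernel argument. *)

From Pilot Require Import Defs.
From Stdlib Require Import Reals Lra Lia Psatz Nsatz List ClassicalEpsilon FunctionalExtensionality.
(* [Reals] exports a binomial coefficient [C]; re-importing [Defs] restores the complex numbers. *)
Import Defs.
Open Scope R_scope.

(** * Riemann integrals *)

(* The Riemann integral of [f] on [a, b] when [f] is integrable there, read without an
   integrability proof (an unspecified real otherwise). *)
Definition integral (f : R -> R) (a b : R) : R :=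
  epsilon (inhabits 0) (fun l => exists pr : Riemann_integrable f a b, RiemannInt pr = l).

Lemma integral_RiemannInt f a b (pr : Riemann_integrable f a b) : integral f a b = RiemannInt pr.
Proof.
  unfold integral.
  destruct (epsilon_spec (inhabits 0)
              (fun l => exists pr : Riemann_integrable f a b, RiemannInt pr = l)) as [pr' <-].
  - exists (RiemannInt pr), pr; reflexivity.
  - apply RiemannInt_P5.
Qed.

Lemma Riemann_integrable_continuity f a b : continuity f -> Riemann_integrable f a b.
Proof.
  intros Hf. destruct (Rle_dec a b).
  - apply continuity_implies_RiemannInt; auto.
  - apply RiemannInt_P1, continuity_implies_RiemannInt; auto; lra.
Qed.
#[local] Hint Resolve Riemann_integrable_continuity : core.

Lemma integral_ext f g a b : (forall x, f x = g x) -> integral f a b = integral g a b.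
Proof. intros H. replace g with f; auto. apply functional_extensionality; auto. Qed.

Lemma integral_lin f g a b l : Riemann_integrable f a b -> Riemann_integrable g a b ->
  integral (fun x => f x + l * g x) a b = integral f a b + l * integral g a b.
Proof.
  intros pr1 pr2.
  rewrite (integral_RiemannInt _ _ _ pr1), (integral_RiemannInt _ _ _ pr2),
    (integral_RiemannInt _ _ _ (RiemannInt_P10 l pr1 pr2)).
  apply RiemannInt_P13.
Qed.

Lemma integral_scal f a b l : continuity f -> integral (fun x => l * f x) a b = l * integral f a b.
Proof.
  intros Hf. assert (H0 : integral (fun _ => 0) a b = 0).
  { pose proof (integral_RiemannInt _ _ _ (RiemannInt_P14 a b 0)) as E.
    rewrite RiemannInt_P15, Rmult_0_l in E. exact E. }
  rewrite <- (integral_ext (fun x => 0 + l * f x)) by (intros; ring).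
  rewrite integral_lin by (apply RiemannInt_P14 || auto). rewrite H0. ring.
Qed.

Lemma integral_Chasles f a b c : continuity f -> integral f a b + integral f b c = integral f a c.
Proof.
  intros Hf. rewrite (integral_RiemannInt _ _ _ (Riemann_integrable_continuity f a b Hf)),
    (integral_RiemannInt _ _ _ (Riemann_integrable_continuity f b c Hf)),
    (integral_RiemannInt _ _ _ (Riemann_integrable_continuity f a c Hf)).
  apply RiemannInt_P26.
Qed.

Lemma integral_abs_le f g a b : Riemann_integrable f a b -> Riemann_integrable g a b -> a <= b ->
  (forall x, a <= x <= b -> Rabs (f x) <= g x) -> Rabs (integral f a b) <= integral g a b.
Proof.
  intros pr1 pr2 Hab H.
  rewrite (integral_RiemannInt _ _ _ pr1), (integral_RiemannInt _ _ _ pr2).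
  eapply Rle_trans; [apply (RiemannInt_P17 pr1 (RiemannInt_P16 pr1)); auto|].
  apply RiemannInt_P19; auto. intros; apply H; lra.
Qed.

Lemma derivable_pt_lim_integral f a x : continuity f ->
  derivable_pt_lim (fun y => integral f a y) x (f x).
Proof.
  intros Hf.
  set (lo := Rmin a x - 1). set (hi := Rmax a x + 1).
  pose proof (Rmin_l a x); pose proof (Rmin_r a x); pose proof (Rmax_l a x); pose proof (Rmax_r a x).
  assert (h : lo <= hi) by (unfold lo, hi; lra).
  assert (Hc : forall y, lo <= y <= hi -> continuity_pt f y) by auto.
  apply derivable_pt_lim_locally_ext
    with (f := fun z => primitive h (FTC_P1 h Hc) z - integral f lo a) (a := lo) (b := hi).
  - unfold lo, hi; lra.
  - intros z Hz. unfold primitive. destruct (Rle_dec lo z); [|lra]. destruct (Rle_dec z hi); [|lra].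
    rewrite <- integral_RiemannInt, <- (integral_Chasles f lo a z Hf). ring.
  - replace (f x) with (f x - 0) by ring. apply derivable_pt_lim_minus.
    + apply RiemannInt_P28. unfold lo, hi; lra.
    + apply derivable_pt_lim_const.
Qed.

Lemma derivative_zero_constant G a b : (forall x, derivable_pt_lim G x 0) -> G b = G a.
Proof.
  intros H. destruct (Rtotal_order a b) as [Hab|[<-|Hab]]; auto.
  - destruct (MVT_cor2 G (fun _ => 0) a b Hab) as [c [Hc _]]; auto. lra.
  - destruct (MVT_cor2 G (fun _ => 0) b a Hab) as [c [Hc _]]; auto. lra.
Qed.

Lemma integral_antiderivative F f a b : continuity f ->
  (forall x, derivable_pt_lim F x (f x)) -> integral f a b = F b - F a.
Proof.
  intros Hf HF.
  assert (E : F b - integral f a b = F a - integral f a a).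
  { apply (derivative_zero_constant (fun y => F y - integral f a y)). intros x.
    replace 0 with (f x - f x) by ring.
    apply derivable_pt_lim_minus; auto. apply derivable_pt_lim_integral; auto. }
  pose proof (integral_Chasles f a a a Hf). lra.
Qed.

(** * Derivatives *)

(* The rules of [Ranalysis] restated with eta-expanded functions, so that [apply] matches
   goals such as [derivable_pt_lim (fun t => f t * g t) x l]. *)
Lemma dpl_val f x l l' : l = l' -> derivable_pt_lim f x l -> derivable_pt_lim f x l'.
Proof. intros ->; auto. Qed.
Lemma dpl_plus f g x a b : derivable_pt_lim f x a -> derivable_pt_lim g x b ->
  derivable_pt_lim (fun t => f t + g t) x (a + b).
Proof. apply derivable_pt_lim_plus. Qed.
Lemma dpl_minus f g x a b : derivable_pt_lim f x a -> derivable_pt_lim g x b ->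
  derivable_pt_lim (fun t => f t - g t) x (a - b).
Proof. apply derivable_pt_lim_minus. Qed.
Lemma dpl_mult f g x a b : derivable_pt_lim f x a -> derivable_pt_lim g x b ->
  derivable_pt_lim (fun t => f t * g t) x (a * g x + f x * b).
Proof. intros. eapply dpl_val; [|apply derivable_pt_lim_mult; eauto]. ring. Qed.
Lemma dpl_opp f x a : derivable_pt_lim f x a -> derivable_pt_lim (fun t => - f t) x (- a).
Proof. apply derivable_pt_lim_opp. Qed.
Lemma dpl_comp f g g' x a : derivable_pt_lim f x a -> (forall y, derivable_pt_lim g y (g' y)) ->
  derivable_pt_lim (fun t => g (f t)) x (g' (f x) * a).
Proof. intros Hf Hg. eapply dpl_val; [|apply (derivable_pt_lim_comp f g), Hg; exact Hf]. ring. Qed.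
Lemma dpl_pow2 f x a : derivable_pt_lim f x a -> derivable_pt_lim (fun t => f t ^ 2) x (2 * f x * a).
Proof.
  intros H. eapply dpl_val; [|apply (dpl_comp f (fun y => y ^ 2) (fun y => 2 * y)); [exact H|]].
  - reflexivity.
  - intros y. eapply dpl_val; [|apply derivable_pt_lim_pow]. simpl; ring.
Qed.
Lemma dpl_div_const f x a c : derivable_pt_lim f x a -> derivable_pt_lim (fun t => f t / c) x (a / c).
Proof.
  intros H. eapply dpl_val; [|apply (dpl_mult f (fun _ => / c)); eauto; apply derivable_pt_lim_const].
  unfold Rdiv; ring.
Qed.

Ltac derivative_step :=
  first
  [ apply dpl_plus | apply dpl_minus | apply dpl_div_const | apply dpl_pow2 | apply dpl_mult
  | apply dpl_opp | apply (dpl_comp _ exp exp); [|apply derivable_pt_lim_exp]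
  | apply (dpl_comp _ cos (fun y => - sin y)); [|apply derivable_pt_lim_cos]
  | apply (dpl_comp _ sin cos); [|apply derivable_pt_lim_sin]
  | apply derivable_pt_lim_id | apply derivable_pt_lim_const ].
(* Leaves the equation between the computed and the announced derivative. *)
Ltac solve_derivative := eapply dpl_val; [|repeat derivative_step]; cbv beta.

(** * Improper integrals *)

Lemma improper_int_integrable f l a b : improper_int f l -> Riemann_integrable f a b.
Proof. intros [H _]. exact (epsilon (H a b) (fun _ => True)). Qed.

Lemma improper_int_intro f l : continuity f ->
  (forall eps, eps > 0 -> exists M, M > 0 /\
     forall a b, a <= - M -> M <= b -> Rabs (integral f a b - l) < eps) ->
  improper_int f l.
Proof.
  intros Hf H. split.
  - intros a b. constructor. auto.
  - intros eps He. destruct (H eps He) as [M [HM H']]. exists M; split; auto.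
    intros a b pr Ha Hb. rewrite <- integral_RiemannInt. auto.
Qed.

Lemma improper_int_elim f l : improper_int f l ->
  forall eps, eps > 0 -> exists M, M > 0 /\
    forall a b, a <= - M -> M <= b -> Rabs (integral f a b - l) < eps.
Proof.
  intros I eps He. destruct (proj2 I eps He) as [M [HM H']]. exists M; split; auto.
  intros a b Ha Hb. rewrite (integral_RiemannInt _ _ _ (improper_int_integrable f l a b I)). auto.
Qed.

Lemma improper_int_ext f g l : (forall t, f t = g t) -> improper_int f l -> improper_int g l.
Proof. intros H. replace g with f; auto. apply functional_extensionality; auto. Qed.

Lemma improper_int_zero : improper_int (fun _ => 0) 0.
Proof.
  apply improper_int_intro; [reg|]. intros eps He. exists 1. split; [lra|]. intros a b _ _.
  rewrite (integral_antiderivative (fun _ => 0)); [|reg|intros; apply derivable_pt_lim_const].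
  rewrite Rminus_0_r, Rminus_0_r, Rabs_R0; lra.
Qed.

Lemma improper_int_lin f g l1 l2 c : improper_int f l1 -> improper_int g l2 ->
  improper_int (fun t => f t + c * g t) (l1 + c * l2).
Proof.
  intros I1 I2. split.
  { intros a b. constructor. apply RiemannInt_P10; eapply improper_int_integrable; eauto. }
  intros eps He. set (e := eps / 2 / (1 + Rabs c)). pose proof (Rabs_pos c).
  assert (He' : e > 0) by (apply Rdiv_lt_0_compat; lra).
  assert (Ee : e * (1 + Rabs c) = eps / 2) by (unfold e; field; lra).
  destruct (improper_int_elim f l1 I1 e He') as [M1 [HM1 H1]].
  destruct (improper_int_elim g l2 I2 e He') as [M2 [HM2 H2]].
  pose proof (Rmax_l M1 M2); pose proof (Rmax_r M1 M2).
  exists (Rmax M1 M2). split; [lra|]. intros a b pr Ha Hb.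
  rewrite <- integral_RiemannInt, integral_lin by (eapply improper_int_integrable; eauto).
  specialize (H1 a b ltac:(lra) ltac:(lra)). specialize (H2 a b ltac:(lra) ltac:(lra)).
  replace (integral f a b + c * integral g a b - (l1 + c * l2))
    with ((integral f a b - l1) + c * (integral g a b - l2)) by ring.
  eapply Rle_lt_trans; [apply Rabs_triang|]. rewrite Rabs_mult.
  assert (Rabs c * Rabs (integral g a b - l2) <= Rabs c * e) by (apply Rmult_le_compat_l; lra).
  nra.
Qed.

Lemma improper_int_plus f g l1 l2 : improper_int f l1 -> improper_int g l2 ->
  improper_int (fun t => f t + g t) (l1 + l2).
Proof.
  intros I1 I2. replace (l1 + l2) with (l1 + 1 * l2) by ring.
  eapply improper_int_ext; [|apply improper_int_lin; eauto]. intros; cbv beta; ring.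
Qed.

Lemma improper_int_scal c f l : improper_int f l -> improper_int (fun t => c * f t) (c * l).
Proof.
  intros I. replace (c * l) with (0 + c * l) by ring.
  eapply improper_int_ext; [|apply improper_int_lin; eauto using improper_int_zero].
  intros; cbv beta; ring.
Qed.

Lemma improper_int_abs_le f g l1 l2 : improper_int f l1 -> improper_int g l2 ->
  (forall t, Rabs (f t) <= g t) -> Rabs l1 <= l2.
Proof.
  intros I1 I2 H. apply Rnot_lt_le; intros Hlt. set (e := (Rabs l1 - l2) / 2).
  destruct (improper_int_elim f l1 I1 e) as [M1 [HM1 H1]]; [unfold e; lra|].
  destruct (improper_int_elim g l2 I2 e) as [M2 [HM2 H2]]; [unfold e; lra|].
  set (M := Rmax M1 M2). pose proof (Rmax_l M1 M2); pose proof (Rmax_r M1 M2).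
  specialize (H1 (- M) M ltac:(unfold M; lra) ltac:(unfold M; lra)).
  specialize (H2 (- M) M ltac:(unfold M; lra) ltac:(unfold M; lra)).
  assert (B : Rabs (integral f (- M) M) <= integral g (- M) M).
  { apply integral_abs_le; try (eapply improper_int_integrable; eauto). unfold M; lra. auto. }
  pose proof (Rabs_triang_inv l1 (integral f (- M) M)).
  rewrite Rabs_minus_sym in H1. apply Rabs_def2 in H2. unfold e in *. lra.
Qed.

Lemma improper_int_unique f l1 l2 : improper_int f l1 -> improper_int f l2 -> l1 = l2.
Proof.
  intros I1 I2.
  assert (H : Rabs (l1 + -1 * l2) <= 0).
  { apply (improper_int_abs_le (fun t => f t + -1 * f t) (fun _ => 0));
      [apply improper_int_lin; auto|apply improper_int_zero|].
    intros t. replace (f t + -1 * f t) with 0 by ring. rewrite Rabs_R0; lra. }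
  pose proof (Rle_abs (l1 + -1 * l2)). pose proof (Rle_abs (- (l1 + -1 * l2))).
  rewrite Rabs_Ropp in *. lra.
Qed.

Lemma exp_le_exp x y : x <= y -> exp x <= exp y.
Proof. intros [H|<-]; [left; apply exp_increasing; auto|lra]. Qed.

Lemma exp_neg_le_inv x : 0 < x -> exp (- x) <= / x.
Proof.
  intros Hx. pose proof (exp_ineq1_le x). rewrite exp_Ropp.
  apply Rinv_le_contravar; lra.
Qed.

Lemma exp_neg_INR_small K e : e > 0 -> exists N : nat, (0 < N)%nat /\ K * exp (- INR N) < e.
Proof.
  intros He. set (K' := Rabs K + 1). pose proof (Rabs_pos K).
  destruct (archimed_cor1 (e / K')) as [N [HN1 HN2]]; [apply Rdiv_lt_0_compat; unfold K'; lra|].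
  exists N. split; auto. assert (HN : 0 < INR N) by (apply lt_0_INR; auto).
  pose proof (exp_neg_le_inv (INR N) HN). pose proof (exp_pos (- INR N)).
  apply Rle_lt_trans with (K' * / INR N).
  - apply Rle_trans with (Rabs K * exp (- INR N)); [apply Rmult_le_compat_r; [lra|apply Rle_abs]|].
    unfold K'. nra.
  - apply Rmult_lt_compat_l with (r := K') in HN1; [|unfold K'; lra].
    replace (K' * (e / K')) with e in HN1 by (field; unfold K'; lra). lra.
Qed.

Definition exp_bounded (K : R) (f : R -> R) : Prop := forall t, Rabs (f t) <= K * exp (- Rabs t).

Lemma exp_bounded_nonneg K f : exp_bounded K f -> 0 <= K.
Proof.
  intros HK. pose proof (HK 0). pose proof (Rabs_pos (f 0)). pose proof (exp_pos (- Rabs 0)). nra.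
Qed.

Section ExpBoundedIntegrals.
Variables (f : R -> R) (K : R).
Hypotheses (Hf : continuity f) (HK : exp_bounded K f).

Lemma integral_right_tail M b : 0 <= M -> M <= b -> Rabs (integral f M b) <= K * exp (- M).
Proof.
  intros HM Hb. pose proof (exp_bounded_nonneg K f HK).
  eapply Rle_trans; [apply (integral_abs_le f (fun t => K * exp (- t))); auto|].
  - apply Riemann_integrable_continuity; reg.
  - intros x Hx. rewrite <- (Rabs_right x) at 2 by lra. apply HK.
  - rewrite (integral_antiderivative (fun t => - K * exp (- t))); [|reg|].
    + pose proof (exp_pos (- b)). nra.
    + intros x. solve_derivative. ring.
Qed.

Lemma integral_left_tail M a : 0 <= M -> a <= - M -> Rabs (integral f a (- M)) <= K * exp (- M).
Proof.
  intros HM Ha. pose proof (exp_bounded_nonneg K f HK).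
  eapply Rle_trans; [apply (integral_abs_le f (fun t => K * exp t)); auto|].
  - apply Riemann_integrable_continuity; reg.
  - intros x Hx. replace x with (- Rabs x) at 2 by (rewrite Rabs_left1 by lra; ring). apply HK.
  - rewrite (integral_antiderivative (fun t => K * exp t)); [|reg|].
    + pose proof (exp_pos a). nra.
    + intros x. solve_derivative. ring.
Qed.

Lemma integral_tails_le M a b : 0 <= M -> a <= - M -> M <= b ->
  Rabs (integral f a b - integral f (- M) M) <= 2 * K * exp (- M).
Proof.
  intros HM Ha Hb.
  rewrite <- (integral_Chasles f a (- M) b Hf), <- (integral_Chasles f (- M) M b Hf).
  replace (integral f a (- M) + (integral f (- M) M + integral f M b) - integral f (- M) M)
    with (integral f a (- M) + integral f M b) by ring.
  eapply Rle_trans; [apply Rabs_triang|].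
  pose proof (integral_left_tail M a HM Ha). pose proof (integral_right_tail M b HM Hb). lra.
Qed.

(* The integrals over [-n, n] form a Cauchy sequence. *)
Lemma improper_int_exp_bounded : exists l, improper_int f l.
Proof.
  set (u n := integral f (- INR n) (INR n)).
  assert (Hu : forall n m, (n <= m)%nat -> Rabs (u m - u n) <= 2 * K * exp (- INR n)).
  { intros n m Hnm. apply le_INR in Hnm. apply integral_tails_le; [apply pos_INR|lra|lra]. }
  assert (HC : Cauchy_crit u).
  { intros e He. destruct (exp_neg_INR_small (2 * K) (e / 2)) as [N [_ HN]]; [lra|]. exists N.
    intros n m Hn Hm. unfold R_dist.
    replace (u n - u m) with ((u n - u N) - (u m - u N)) by ring.
    eapply Rle_lt_trans; [apply Rabs_triang|]. rewrite Rabs_Ropp.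
    pose proof (Hu N n ltac:(lia)). pose proof (Hu N m ltac:(lia)). lra. }
  destruct (R_complete u HC) as [l Hl]. exists l.
  apply improper_int_intro; auto. intros eps He.
  destruct (exp_neg_INR_small (2 * K) (eps / 4)) as [N [HN0 HN]]; [lra|].
  destruct (Hl (eps / 4)) as [N' HN']; [lra|].
  exists (INR N). split; [apply lt_0_INR; auto|]. intros a b Ha Hb.
  pose proof (integral_tails_le (INR N) a b (pos_INR N) Ha Hb) as T. fold (u N) in T.
  pose proof (Hu N (max N N') ltac:(lia)).
  specialize (HN' (max N N') ltac:(lia)). unfold R_dist in HN'.
  replace (integral f a b - l)
    with ((integral f a b - u N) - (u (max N N') - u N) + (u (max N N') - l)) by ring.
  eapply Rle_lt_trans; [apply Rabs_triang|].
  eapply Rle_lt_trans; [apply Rplus_le_compat_r, Rabs_triang|]. rewrite Rabs_Ropp. lra.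
Qed.

End ExpBoundedIntegrals.

Lemma improper_int_sub_derivative g H H' l K : continuity g -> continuity H' ->
  (forall t, derivable_pt_lim H t (H' t)) -> exp_bounded K H ->
  improper_int g l -> improper_int (fun t => g t - H' t) l.
Proof.
  intros Hg Hh HH HK Ig. pose proof (exp_bounded_nonneg K H HK).
  apply improper_int_intro; [reg|]. intros eps He.
  destruct (improper_int_elim g l Ig (eps / 2)) as [M [HM HMb]]; [lra|].
  destruct (exp_neg_INR_small (2 * K) (eps / 2)) as [N [HN0 HKN]]; [lra|].
  assert (HN : 0 < INR N) by (apply lt_0_INR; auto).
  pose proof (Rmax_l M (INR N)); pose proof (Rmax_r M (INR N)).
  exists (Rmax M (INR N)). split; [lra|]. intros a b Ha Hb.
  rewrite (integral_ext _ (fun t => g t + -1 * H' t)) by (intros; ring).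
  rewrite integral_lin, (integral_antiderivative H H') by auto.
  specialize (HMb a b ltac:(lra) ltac:(lra)).
  assert (Ea : Rabs (H a) <= K * exp (- INR N)).
  { eapply Rle_trans; [apply HK|]. apply Rmult_le_compat_l; auto. apply exp_le_exp.
    rewrite Rabs_left1 by lra. lra. }
  assert (Eb : Rabs (H b) <= K * exp (- INR N)).
  { eapply Rle_trans; [apply HK|]. apply Rmult_le_compat_l; auto. apply exp_le_exp.
    rewrite Rabs_right by lra. lra. }
  replace (integral g a b + -1 * (H b - H a) - l) with ((integral g a b - l) - H b + H a) by ring.
  eapply Rle_lt_trans; [apply Rabs_triang|].
  eapply Rle_lt_trans; [apply Rplus_le_compat_r, Rabs_triang|]. rewrite Rabs_Ropp. lra.
Qed.

(** * Differentiation under the integral sign *)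

Lemma mean_value_bound (phi phi' : R -> R) a b B : (forall x, derivable_pt_lim phi x (phi' x)) ->
  (forall x, Rabs (x - a) <= Rabs (b - a) -> Rabs (phi' x) <= B) ->
  Rabs (phi b - phi a) <= B * Rabs (b - a).
Proof.
  intros Hd HB. destruct (Rtotal_order a b) as [Hab|[<-|Hab]].
  - destruct (MVT_cor2 phi phi' a b Hab) as [c [-> Hc]]; auto.
    rewrite Rabs_mult. apply Rmult_le_compat_r; [apply Rabs_pos|]. apply HB.
    rewrite !Rabs_right by lra. lra.
  - rewrite !Rminus_diag, Rabs_R0, Rmult_0_r; lra.
  - destruct (MVT_cor2 phi phi' b a Hab) as [c [Hc' Hc]]; auto.
    rewrite Rabs_minus_sym, (Rabs_minus_sym b), Hc', Rabs_mult.
    apply Rmult_le_compat_r; [apply Rabs_pos|]. apply HB.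
    rewrite !Rabs_left1 by lra. lra.
Qed.

Lemma taylor2_bound phi phi1 phi2 y k B : (forall x, derivable_pt_lim phi x (phi1 x)) ->
  (forall x, derivable_pt_lim phi1 x (phi2 x)) ->
  (forall x, Rabs (x - y) <= Rabs k -> Rabs (phi2 x) <= B) ->
  Rabs (phi (y + k) - phi y - k * phi1 y) <= B * k ^ 2.
Proof.
  intros H1 H2 HB.
  assert (HB0 : 0 <= B).
  { pose proof (HB y ltac:(rewrite Rminus_diag, Rabs_R0; apply Rabs_pos)). pose proof (Rabs_pos (phi2 y)); lra. }
  assert (Hpsi : forall z, derivable_pt_lim (fun z => phi (y + z) - z * phi1 y) z (phi1 (y + z) - phi1 y)).
  { intros z. apply dpl_minus.
    - apply dpl_val with (phi1 (y + z) * 1); [ring|].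
      apply (dpl_comp (fun z => y + z) phi phi1); auto. solve_derivative. ring.
    - solve_derivative. ring. }
  pose proof (mean_value_bound _ _ 0 k (B * Rabs k) Hpsi) as Hm. cbv beta in Hm.
  rewrite Rplus_0_r, !Rminus_0_r, Rmult_0_l, Rminus_0_r in Hm.
  replace (phi (y + k) - phi y - k * phi1 y) with (phi (y + k) - k * phi1 y - phi y) by ring.
  replace (B * k ^ 2) with (B * Rabs k * Rabs k)
    by (rewrite Rmult_assoc, <- Rabs_mult, Rabs_right by (apply Rle_ge; nra); ring).
  apply Hm. intros z Hz. rewrite !Rminus_0_r in Hz. eapply Rle_trans.
  - apply (mean_value_bound phi1 phi2 y (y + z) B H2).
    intros x Hx. apply HB. replace (y + z - y) with z in Hx by ring. lra.
  - replace (y + z - y) with z by ring. apply Rmult_le_compat_l; auto.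
Qed.

Lemma derivable_pt_lim_quadratic_remainder F s G B :
  (forall h, Rabs h <= 1 -> Rabs (F (s + h) - F s - h * G) <= h ^ 2 * B) ->
  derivable_pt_lim F s G.
Proof.
  intros HF.
  assert (HB : 0 <= B).
  { pose proof (HF 1 ltac:(rewrite Rabs_R1; lra)). pose proof (Rabs_pos (F (s + 1) - F s - 1 * G)). lra. }
  intros eps He.
  assert (Hd : 0 < Rmin 1 (eps / (B + 1))) by (apply Rmin_pos; [lra|apply Rdiv_lt_0_compat; lra]).
  exists (mkposreal _ Hd). simpl. intros h Hh0 Hh.
  pose proof (Rmin_l 1 (eps / (B + 1))); pose proof (Rmin_r 1 (eps / (B + 1))).
  assert (Hah : 0 < Rabs h) by (apply Rabs_pos_lt; auto).
  specialize (HF h ltac:(lra)).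
  replace ((F (s + h) - F s) / h - G) with ((F (s + h) - F s - h * G) / h) by (field; auto).
  unfold Rdiv. rewrite Rabs_mult, Rabs_inv.
  replace (h ^ 2) with (Rabs h * Rabs h) in HF by (rewrite <- Rabs_mult, Rabs_right; [ring|nra]).
  apply Rle_lt_trans with (Rabs h * B).
  - apply (Rmult_le_reg_r (Rabs h)); auto. field_simplify; lra.
  - assert (Rabs h * (B + 1) < eps).
    { apply Rlt_le_trans with (eps / (B + 1) * (B + 1)); [apply Rmult_lt_compat_r; lra|].
      right; field; lra. }
    nra.
Qed.

Lemma derivable_pt_lim_integral_param (f g : R -> R -> R) B a b s :
  (forall s', continuity (f s')) -> continuity (g s) -> a <= b ->
  (forall h t, Rabs h <= 1 -> a <= t <= b -> Rabs (f (s + h) t - f s t - h * g s t) <= h ^ 2 * B) ->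
  derivable_pt_lim (fun s' => integral (f s') a b) s (integral (g s) a b).
Proof.
  intros Hf Hg Hab Hb. apply derivable_pt_lim_quadratic_remainder with (B := B * (b - a)).
  intros h Hh.
  assert (Hd : continuity (fun t => f (s + h) t + -1 * f s t)).
  { apply continuity_plus; try apply continuity_scal; auto. }
  replace (integral (f (s + h)) a b - integral (f s) a b - h * integral (g s) a b)
    with (integral (fun t => (f (s + h) t + -1 * f s t) + - h * g s t) a b)
    by (rewrite !integral_lin by auto; ring).
  eapply Rle_trans; [apply (integral_abs_le _ (fun _ => h ^ 2 * B)); auto|].
  - apply Riemann_integrable_continuity, continuity_plus; try apply continuity_scal; auto.
  - apply Riemann_integrable_continuity; reg.
  - intros t Ht. replace (f (s + h) t + -1 * f s t + - h * g s t)
      with (f (s + h) t - f s t - h * g s t) by ring. auto.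
  - rewrite (integral_antiderivative (fun t => h ^ 2 * B * t)); [right; ring|reg|].
    intros; solve_derivative; ring.
Qed.

Lemma derivable_pt_lim_improper_param (f g : R -> R -> R) (F G : R -> R) B IB s :
  (forall s', improper_int (f s') (F s')) -> improper_int (g s) (G s) -> improper_int B IB ->
  (forall h t, Rabs h <= 1 -> Rabs (f (s + h) t - f s t - h * g s t) <= h ^ 2 * B t) ->
  derivable_pt_lim F s (G s).
Proof.
  intros IF IG IB' Hb. apply derivable_pt_lim_quadratic_remainder with (B := IB).
  intros h Hh. replace (h ^ 2 * IB) with (0 + h ^ 2 * IB) by ring.
  apply (improper_int_abs_le (fun t => (f (s + h) t + -1 * f s t) + - h * g s t)
           (fun t => 0 + h ^ 2 * B t)).
  - replace (F (s + h) - F s - h * G s) with (F (s + h) + -1 * F s + - h * G s) by ring.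
    repeat apply improper_int_lin; auto.
  - apply improper_int_lin; auto using improper_int_zero.
  - intros t. replace (f (s + h) t + -1 * f s t + - h * g s t)
      with (f (s + h) t - f s t - h * g s t) by ring. rewrite Rplus_0_l. auto.
Qed.

(** * Gaussian integrals on the real line *)

Definition gauss_exp (p t : R) : R := exp (- t ^ 2 / 2 + p * t).

(* Meaningful only when the improper integral of [f] exists. *)
Definition improper_value (f : R -> R) : R := epsilon (inhabits 0) (improper_int f).

Lemma improper_value_spec f : (exists l, improper_int f l) -> improper_int f (improper_value f).
Proof. intros H. unfold improper_value. apply epsilon_spec, H. Qed.

Definition gauss_cos (p q : R) : R := improper_value (fun t => gauss_exp p t * cos (q * t)).
Definition gauss_sin (p q : R) : R := improper_value (fun t => gauss_exp p t * sin (q * t)).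
Definition gauss_moment2 (p t : R) : R := gauss_exp p t * exp (Rabs t) * t ^ 2.

Lemma gauss_exp_pos p t : 0 < gauss_exp p t.
Proof. apply exp_pos. Qed.

Lemma derivable_pt_lim_gauss_exp p t : derivable_pt_lim (gauss_exp p) t ((p - t) * gauss_exp p t).
Proof. unfold gauss_exp. solve_derivative. field. Qed.

Lemma continuity_exp_Rabs : continuity (fun t => exp (Rabs t)).
Proof.
  intros x. apply (continuity_pt_comp Rabs exp); [apply Rcontinuity_abs|].
  apply derivable_continuous_pt, derivable_pt_exp.
Qed.

Lemma Rabs_cos_le x : Rabs (cos x) <= 1.
Proof. apply Rabs_le. pose proof (COS_bound x). lra. Qed.
Lemma Rabs_sin_le x : Rabs (sin x) <= 1.
Proof. apply Rabs_le. pose proof (SIN_bound x). lra. Qed.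

Lemma sqr_le_exp_Rabs t : t ^ 2 <= 4 * exp (Rabs t).
Proof.
  pose proof (exp_ineq1_le (Rabs t / 2)). pose proof (Rabs_pos t).
  replace (exp (Rabs t)) with (exp (Rabs t / 2) * exp (Rabs t / 2))
    by (rewrite <- exp_plus; f_equal; field).
  replace (t ^ 2) with (Rabs t * Rabs t) by (rewrite <- Rabs_mult, Rabs_right; [ring|nra]).
  nra.
Qed.

(* [-t^2/2 + p t + j |t|] is at most [(|p| + j + 1)^2 / 2 - |t|]. *)
Lemma gauss_exp_bounded p j c f : 0 <= j ->
  (forall t, Rabs (f t) <= c * (gauss_exp p t * exp (j * Rabs t))) ->
  exp_bounded (c * exp ((Rabs p + j + 1) ^ 2 / 2)) f.
Proof.
  intros Hj H t. eapply Rle_trans; [apply H|].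
  assert (Hc : 0 <= c).
  { pose proof (H 0). pose proof (Rabs_pos (f 0)).
    pose proof (Rmult_lt_0_compat _ _ (gauss_exp_pos p 0) (exp_pos (j * Rabs 0))). nra. }
  rewrite Rmult_assoc. apply Rmult_le_compat_l; auto.
  unfold gauss_exp. rewrite <- !exp_plus. apply exp_le_exp.
  pose proof (Rabs_pos t). pose proof (Rabs_pos p).
  assert (p * t <= Rabs p * Rabs t) by (rewrite <- Rabs_mult; apply Rle_abs).
  replace (t ^ 2) with (Rabs t ^ 2) by (unfold Rabs; destruct (Rcase_abs t); ring).
  pose proof (pow2_ge_0 (Rabs t - (Rabs p + j + 1))). nra.
Qed.

Lemma gauss_exp_trig_bounded p (trig : R -> R) : (forall x, Rabs (trig x) <= 1) ->
  exp_bounded (exp ((Rabs p + 1) ^ 2 / 2)) (fun t => gauss_exp p t * trig t).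
Proof.
  intros Htrig. replace (Rabs p + 1) with (Rabs p + 0 + 1) by ring.
  rewrite <- (Rmult_1_l (exp _)). apply gauss_exp_bounded; [lra|]. intros t.
  rewrite Rabs_mult, Rmult_0_l, exp_0, Rmult_1_r, Rmult_1_l, (Rabs_right (gauss_exp p t))
    by (apply Rle_ge; left; apply gauss_exp_pos).
  pose proof (Htrig t). pose proof (gauss_exp_pos p t). nra.
Qed.

Lemma improper_int_gauss_cos p q :
  improper_int (fun t => gauss_exp p t * cos (q * t)) (gauss_cos p q).
Proof.
  apply improper_value_spec. eapply improper_int_exp_bounded; [unfold gauss_exp; reg|].
  apply (gauss_exp_trig_bounded p (fun t => cos (q * t))). intros; apply Rabs_cos_le.
Qed.

Lemma improper_int_gauss_sin p q :
  improper_int (fun t => gauss_exp p t * sin (q * t)) (gauss_sin p q).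
Proof.
  apply improper_value_spec. eapply improper_int_exp_bounded; [unfold gauss_exp; reg|].
  apply (gauss_exp_trig_bounded p (fun t => sin (q * t))). intros; apply Rabs_sin_le.
Qed.

Lemma improper_int_gauss_moment2 p : improper_int (gauss_moment2 p) (improper_value (gauss_moment2 p)).
Proof.
  apply improper_value_spec. eapply improper_int_exp_bounded.
  { unfold gauss_moment2, gauss_exp. apply continuity_mult; [apply continuity_mult|]; [reg|apply continuity_exp_Rabs|reg]. }
  apply (gauss_exp_bounded p 2 4); [lra|]. intros t. unfold gauss_moment2.
  pose proof (gauss_exp_pos p t). pose proof (exp_pos (Rabs t)). pose proof (sqr_le_exp_Rabs t).
  pose proof (pow2_ge_0 t).
  rewrite Rabs_right by (apply Rle_ge, Rmult_le_pos; [apply Rmult_le_pos|]; lra).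
  replace (exp (2 * Rabs t)) with (exp (Rabs t) * exp (Rabs t)) by (rewrite <- exp_plus; f_equal; ring).
  assert (0 < gauss_exp p t * exp (Rabs t)) by (apply Rmult_lt_0_compat; auto). nra.
Qed.

(* Integration by parts against [d/dt (gauss_exp p t * sin (q t))]. *)
Lemma improper_int_t_gauss_sin p q :
  improper_int (fun t => t * (gauss_exp p t * sin (q * t))) (p * gauss_sin p q + q * gauss_cos p q).
Proof.
  assert (IBP : improper_int
    (fun t => (p * (gauss_exp p t * sin (q * t)) + q * (gauss_exp p t * cos (q * t)))
              - ((p - t) * gauss_exp p t * sin (q * t) + gauss_exp p t * (cos (q * t) * q)))
    (p * gauss_sin p q + q * gauss_cos p q)).
  { apply improper_int_sub_derivative with (H := fun t => gauss_exp p t * sin (q * t))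
      (K := exp ((Rabs p + 1) ^ 2 / 2)); try (unfold gauss_exp; reg).
    - intros t. eapply dpl_val;
        [|apply dpl_mult; [apply derivable_pt_lim_gauss_exp|repeat derivative_step]].
      cbv beta; ring.
    - apply (gauss_exp_trig_bounded p (fun t => sin (q * t))). intros; apply Rabs_sin_le.
    - apply improper_int_lin; [apply improper_int_scal|];
        auto using improper_int_gauss_sin, improper_int_gauss_cos. }
  eapply improper_int_ext; [|exact IBP]. intros t. cbv beta. ring.
Qed.

Lemma improper_int_t_gauss_cos p q :
  improper_int (fun t => t * (gauss_exp p t * cos (q * t))) (p * gauss_cos p q - q * gauss_sin p q).
Proof.
  assert (IBP : improper_int
    (fun t => (p * (gauss_exp p t * cos (q * t)) + - q * (gauss_exp p t * sin (q * t)))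
              - ((p - t) * gauss_exp p t * cos (q * t) + gauss_exp p t * (- sin (q * t) * q)))
    (p * gauss_cos p q + - q * gauss_sin p q)).
  { apply improper_int_sub_derivative with (H := fun t => gauss_exp p t * cos (q * t))
      (K := exp ((Rabs p + 1) ^ 2 / 2)); try (unfold gauss_exp; reg).
    - intros t. eapply dpl_val;
        [|apply dpl_mult; [apply derivable_pt_lim_gauss_exp|repeat derivative_step]].
      cbv beta; ring.
    - apply (gauss_exp_trig_bounded p (fun t => cos (q * t))). intros; apply Rabs_cos_le.
    - apply improper_int_lin; [apply improper_int_scal|];
        auto using improper_int_gauss_sin, improper_int_gauss_cos. }
  replace (p * gauss_cos p q - q * gauss_sin p q) with (p * gauss_cos p q + - q * gauss_sin p q) by ring.
  eapply improper_int_ext; [|exact IBP]. intros t. cbv beta. ring.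
Qed.

Lemma cos_taylor2_bound q h t :
  Rabs (cos ((q + h) * t) - cos (q * t) - h * (- t * sin (q * t))) <= h ^ 2 * t ^ 2.
Proof.
  replace (h ^ 2 * t ^ 2) with (t ^ 2 * h ^ 2) by ring.
  apply (taylor2_bound (fun s => cos (s * t)) (fun s => - t * sin (s * t)) (fun s => - t ^ 2 * cos (s * t))).
  - intros x. solve_derivative. ring.
  - intros x. solve_derivative. ring.
  - intros x _. rewrite Rabs_mult, Rabs_Ropp, Rabs_right by (apply Rle_ge, pow2_ge_0).
    pose proof (Rabs_cos_le (x * t)). pose proof (pow2_ge_0 t). nra.
Qed.

Lemma sin_taylor2_bound q h t :
  Rabs (sin ((q + h) * t) - sin (q * t) - h * (t * cos (q * t))) <= h ^ 2 * t ^ 2.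
Proof.
  replace (h ^ 2 * t ^ 2) with (t ^ 2 * h ^ 2) by ring.
  apply (taylor2_bound (fun s => sin (s * t)) (fun s => t * cos (s * t)) (fun s => - t ^ 2 * sin (s * t))).
  - intros x. solve_derivative. ring.
  - intros x. solve_derivative. ring.
  - intros x _. rewrite Rabs_mult, Rabs_Ropp, Rabs_right by (apply Rle_ge, pow2_ge_0).
    pose proof (Rabs_sin_le (x * t)). pose proof (pow2_ge_0 t). nra.
Qed.

Lemma gauss_exp_trig_remainder p (err : R -> R) t h : Rabs (err t) <= h ^ 2 * t ^ 2 ->
  Rabs (gauss_exp p t * err t) <= h ^ 2 * gauss_moment2 p t.
Proof.
  intros He. unfold gauss_moment2. pose proof (gauss_exp_pos p t). pose proof (exp_pos (Rabs t)).
  rewrite Rabs_mult, Rabs_right by lra.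
  pose proof (exp_le_exp 0 (Rabs t) (Rabs_pos t)). rewrite exp_0 in *.
  pose proof (pow2_ge_0 h). pose proof (pow2_ge_0 t). pose proof (Rabs_pos (err t)).
  apply Rle_trans with (gauss_exp p t * (h ^ 2 * t ^ 2)); [apply Rmult_le_compat_l; lra|].
  replace (h ^ 2 * (gauss_exp p t * exp (Rabs t) * t ^ 2))
    with (gauss_exp p t * (h ^ 2 * t ^ 2) * exp (Rabs t)) by ring.
  rewrite <- (Rmult_1_r (gauss_exp p t * (h ^ 2 * t ^ 2))) at 1.
  apply Rmult_le_compat_l; [apply Rmult_le_pos|]; nra.
Qed.

Lemma derivable_pt_lim_gauss_cos_freq p q :
  derivable_pt_lim (gauss_cos p) q (- (p * gauss_sin p q + q * gauss_cos p q)).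
Proof.
  apply (derivable_pt_lim_improper_param (fun s t => gauss_exp p t * cos (s * t))
           (fun s t => - t * (gauss_exp p t * sin (s * t))) (gauss_cos p)
           (fun s => - (p * gauss_sin p s + s * gauss_cos p s)) (gauss_moment2 p)
           (improper_value (gauss_moment2 p)));
    auto using improper_int_gauss_cos, improper_int_gauss_moment2.
  - replace (- (p * gauss_sin p q + q * gauss_cos p q))
      with (-1 * (p * gauss_sin p q + q * gauss_cos p q)) by ring.
    eapply improper_int_ext; [|apply improper_int_scal, improper_int_t_gauss_sin].
    intros t. cbv beta. ring.
  - intros h t _.
    replace (gauss_exp p t * cos ((q + h) * t) - gauss_exp p t * cos (q * t)
               - h * (- t * (gauss_exp p t * sin (q * t))))
      with (gauss_exp p t * (cos ((q + h) * t) - cos (q * t) - h * (- t * sin (q * t)))) by ring.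
    apply (gauss_exp_trig_remainder p (fun t => cos ((q + h) * t) - cos (q * t) - h * (- t * sin (q * t)))).
    apply cos_taylor2_bound.
Qed.

Lemma derivable_pt_lim_gauss_sin_freq p q :
  derivable_pt_lim (gauss_sin p) q (p * gauss_cos p q - q * gauss_sin p q).
Proof.
  apply (derivable_pt_lim_improper_param (fun s t => gauss_exp p t * sin (s * t))
           (fun s t => t * (gauss_exp p t * cos (s * t))) (gauss_sin p)
           (fun s => p * gauss_cos p s - s * gauss_sin p s) (gauss_moment2 p)
           (improper_value (gauss_moment2 p)));
    auto using improper_int_gauss_sin, improper_int_gauss_moment2, improper_int_t_gauss_cos.
  intros h t _.
  replace (gauss_exp p t * sin ((q + h) * t) - gauss_exp p t * sin (q * t)
             - h * (t * (gauss_exp p t * cos (q * t))))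
    with (gauss_exp p t * (sin ((q + h) * t) - sin (q * t) - h * (t * cos (q * t)))) by ring.
  apply (gauss_exp_trig_remainder p (fun t => sin ((q + h) * t) - sin (q * t) - h * (t * cos (q * t)))).
  apply sin_taylor2_bound.
Qed.

Lemma derivable_pt_lim_gauss_cos_shift p :
  derivable_pt_lim (fun s => gauss_cos s 0) p (p * gauss_cos p 0).
Proof.
  apply (derivable_pt_lim_improper_param (fun s t => gauss_exp s t * cos (0 * t))
           (fun s t => t * (gauss_exp s t * cos (0 * t))) (fun s => gauss_cos s 0)
           (fun s => s * gauss_cos s 0) (gauss_moment2 p) (improper_value (gauss_moment2 p)));
    auto using improper_int_gauss_cos, improper_int_gauss_moment2.
  - replace (p * gauss_cos p 0) with (p * gauss_cos p 0 - 0 * gauss_sin p 0) by ring.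
    apply improper_int_t_gauss_cos.
  - intros h t Hh. rewrite Rmult_0_l, cos_0, !Rmult_1_r. unfold gauss_moment2.
    replace (h ^ 2 * (gauss_exp p t * exp (Rabs t) * t ^ 2))
      with (t ^ 2 * (gauss_exp p t * exp (Rabs t)) * h ^ 2) by ring.
    apply (taylor2_bound (fun x => gauss_exp x t) (fun x => t * gauss_exp x t)
             (fun x => t ^ 2 * gauss_exp x t)).
    + intros x. unfold gauss_exp. solve_derivative. field.
    + intros x. unfold gauss_exp. solve_derivative. field.
    + intros x Hx. rewrite Rabs_mult, Rabs_right, (Rabs_right (gauss_exp x t))
        by (apply Rle_ge; (apply pow2_ge_0 || (left; apply gauss_exp_pos))).
      apply Rmult_le_compat_l; [apply pow2_ge_0|].
      unfold gauss_exp. rewrite <- exp_plus. apply exp_le_exp.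
      assert ((x - p) * t <= Rabs t).
      { eapply Rle_trans; [apply Rle_abs|]. rewrite Rabs_mult. pose proof (Rabs_pos t). nra. }
      lra.
Qed.

Lemma gauss_sin_freq0 p : gauss_sin p 0 = 0.
Proof.
  apply (improper_int_unique (fun t => gauss_exp p t * sin (0 * t))); [apply improper_int_gauss_sin|].
  eapply improper_int_ext; [|apply improper_int_zero]. intros t. rewrite Rmult_0_l, sin_0; ring.
Qed.

(* Both combinations have zero derivative in [q]: they are the real and imaginary parts of
   [e^(q^2/2 - i p q)] times the integral of [gauss_exp p t * e^(i q t)]. *)
Lemma gauss_trig_rotation p q :
  exp (q ^ 2 / 2) * (gauss_cos p q * cos (p * q) + gauss_sin p q * sin (p * q)) = gauss_cos p 0 /\
  exp (q ^ 2 / 2) * (gauss_sin p q * cos (p * q) - gauss_cos p q * sin (p * q)) = 0.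
Proof.
  pose proof (gauss_sin_freq0 p) as S0.
  split.
  - rewrite (derivative_zero_constant
      (fun q => exp (q ^ 2 / 2) * (gauss_cos p q * cos (p * q) + gauss_sin p q * sin (p * q))) 0 q).
    + rewrite S0, Rmult_0_r, cos_0, sin_0. replace (0 ^ 2 / 2) with 0 by field. rewrite exp_0. ring.
    + intros x. eapply dpl_val; [|repeat (first [derivative_step | apply derivable_pt_lim_gauss_cos_freq
                                                | apply derivable_pt_lim_gauss_sin_freq])].
      cbv beta. field.
  - rewrite (derivative_zero_constant
      (fun q => exp (q ^ 2 / 2) * (gauss_sin p q * cos (p * q) - gauss_cos p q * sin (p * q))) 0 q).
    + rewrite S0, Rmult_0_r, cos_0, sin_0. ring.
    + intros x. eapply dpl_val; [|repeat (first [derivative_step | apply derivable_pt_lim_gauss_cos_freq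
                                                | apply derivable_pt_lim_gauss_sin_freq])].
      cbv beta. field.
Qed.

Lemma gauss_cos_shift p : gauss_cos p 0 = exp (p ^ 2 / 2) * gauss_cos 0 0.
Proof.
  assert (H : exp (- (p ^ 2 / 2)) * gauss_cos p 0 = exp (- (0 ^ 2 / 2)) * gauss_cos 0 0).
  { apply (derivative_zero_constant (fun p => exp (- (p ^ 2 / 2)) * gauss_cos p 0)).
    intros x. eapply dpl_val;
      [|apply dpl_mult; [repeat derivative_step|apply derivable_pt_lim_gauss_cos_shift]].
    cbv beta. field. }
  replace (0 ^ 2 / 2) with 0 in H by field. rewrite Ropp_0, exp_0, Rmult_1_l in H.
  rewrite <- H, <- Rmult_assoc, <- exp_plus.
  replace (p ^ 2 / 2 + - (p ^ 2 / 2)) with 0 by ring. rewrite exp_0; ring.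
Qed.

Lemma gauss_trig_closed_form p q :
  gauss_cos p q = gauss_cos 0 0 * exp ((p ^ 2 - q ^ 2) / 2) * cos (p * q) /\
  gauss_sin p q = gauss_cos 0 0 * exp ((p ^ 2 - q ^ 2) / 2) * sin (p * q).
Proof.
  destruct (gauss_trig_rotation p q) as [X Y]. rewrite gauss_cos_shift in X.
  set (e := exp (q ^ 2 / 2)) in *. assert (He : 0 < e) by apply exp_pos.
  assert (E : exp ((p ^ 2 - q ^ 2) / 2) = exp (p ^ 2 / 2) / e).
  { unfold e, Rdiv. rewrite <- exp_Ropp, <- exp_plus. f_equal. field. }
  rewrite E. pose proof (sin2_cos2 (p * q)) as SC. unfold Rsqr in SC.
  set (C := gauss_cos p q) in *. set (S := gauss_sin p q) in *.
  set (c := cos (p * q)) in *. set (s := sin (p * q)) in *.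
  split; apply (Rmult_eq_reg_l e); try lra.
  - transitivity (c * (e * (C * c + S * s)) - s * (e * (S * c - C * s))).
    + transitivity (e * C * (s * s + c * c)); [rewrite SC|]; ring.
    + rewrite X, Y. field. lra.
  - transitivity (s * (e * (C * c + S * s)) + c * (e * (S * c - C * s))).
    + transitivity (e * S * (s * s + c * c)); [rewrite SC|]; ring.
    + rewrite X, Y. field. lra.
Qed.

(** * The value sqrt (2 PI) *)

Definition std_gauss (x : R) : R := exp (- x ^ 2 / 2).

(* With [A s] the integral of [std_gauss] over [-s, s] and [B s] the integral of
   [arctan_kernel s] over [-1, 1], [A s ^ 2 / 4 + B s] is constant, equal to [B 0 = PI / 2],
   while [B s] vanishes at infinity. *)
Definition arctan_kernel (s x : R) : R := exp (- s ^ 2 * (1 + x ^ 2) / 2) / (1 + x ^ 2).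

Lemma continuity_std_gauss : continuity std_gauss.
Proof. unfold std_gauss; reg. Qed.

Lemma one_plus_sqr_pos x : 0 < 1 + x ^ 2.
Proof. pose proof (pow2_ge_0 x); lra. Qed.

Lemma continuity_arctan_kernel s : continuity (arctan_kernel s).
Proof.
  intros x. apply continuity_pt_div; [reg|reg|]. pose proof (one_plus_sqr_pos x); lra.
Qed.

Lemma integral_arctan_kernel_0 : integral (arctan_kernel 0) (-1) 1 = PI / 2.
Proof.
  rewrite (integral_ext _ (fun x => / (1 + x ^ 2))).
  2: { intros x. unfold arctan_kernel. replace (- 0 ^ 2 * (1 + x ^ 2) / 2) with 0 by field.
       rewrite exp_0. pose proof (one_plus_sqr_pos x). field. lra. }
  rewrite (integral_antiderivative atan).
  - replace (-1) with (- (1)) by ring. rewrite atan_opp, atan_1. field.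
  - intros x. apply continuity_pt_inv; [reg|]. pose proof (one_plus_sqr_pos x); lra.
  - apply derivable_pt_lim_atan.
Qed.

Lemma derivable_pt_lim_integral_arctan_kernel s :
  derivable_pt_lim (fun s => integral (arctan_kernel s) (-1) 1) s
    (integral (fun x => - s * exp (- s ^ 2 * (1 + x ^ 2) / 2)) (-1) 1).
Proof.
  apply (derivable_pt_lim_integral_param arctan_kernel (fun s x => - s * exp (- s ^ 2 * (1 + x ^ 2) / 2))
           (2 * (Rabs s + 1) ^ 2 + 1)); [apply continuity_arctan_kernel|reg|lra|].
  intros h x Hh Hx.
  assert (Hw : 1 <= 1 + x ^ 2 <= 2) by (split; nra).
  set (w := 1 + x ^ 2) in *. unfold arctan_kernel. fold w.
  replace (h ^ 2 * (2 * (Rabs s + 1) ^ 2 + 1)) with ((2 * (Rabs s + 1) ^ 2 + 1) * h ^ 2) by ring.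
  apply (taylor2_bound (fun y => exp (- y ^ 2 * w / 2) / w) (fun y => - y * exp (- y ^ 2 * w / 2))
           (fun y => (y ^ 2 * w - 1) * exp (- y ^ 2 * w / 2))).
  - intros y. solve_derivative. field. lra.
  - intros y. solve_derivative. field.
  - intros y Hy. rewrite Rabs_mult.
    assert (E1 : Rabs (exp (- y ^ 2 * w / 2)) <= 1).
    { rewrite Rabs_right, <- exp_0 by (apply Rle_ge; left; apply exp_pos).
      apply exp_le_exp. pose proof (pow2_ge_0 y). nra. }
    assert (Hy2 : y ^ 2 <= (Rabs s + 1) ^ 2).
    { assert (Rabs y <= Rabs s + 1).
      { replace y with (s + (y - s)) by ring. eapply Rle_trans; [apply Rabs_triang|lra]. }
      replace (y ^ 2) with (Rabs y ^ 2) by (unfold Rabs; destruct (Rcase_abs y); ring).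
      pose proof (Rabs_pos y). nra. }
    assert (E2 : Rabs (y ^ 2 * w - 1) <= 2 * (Rabs s + 1) ^ 2 + 1).
    { apply Rabs_le. pose proof (pow2_ge_0 y). split; nra. }
    pose proof (Rabs_pos (y ^ 2 * w - 1)). pose proof (Rabs_pos (exp (- y ^ 2 * w / 2))). nra.
Qed.

Lemma integral_arctan_kernel_derivative s :
  integral (fun x => - s * exp (- s ^ 2 * (1 + x ^ 2) / 2)) (-1) 1
  = - exp (- s ^ 2 / 2) * integral std_gauss (- s) s.
Proof.
  rewrite (integral_ext _ (fun x => - exp (- s ^ 2 / 2) * (s * std_gauss (s * x)))).
  - rewrite integral_scal by (unfold std_gauss; reg). f_equal.
    rewrite (integral_antiderivative (fun x => integral std_gauss 0 (s * x))).
    + replace (s * -1) with (- s) by ring. rewrite Rmult_1_r.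
      rewrite <- (integral_Chasles std_gauss 0 (- s) s continuity_std_gauss). ring.
    + unfold std_gauss; reg.
    + intros x. apply dpl_val with (std_gauss (s * x) * s); [ring|].
      apply (dpl_comp (fun x => s * x) (fun y => integral std_gauss 0 y) std_gauss).
      * solve_derivative. ring.
      * intros y. apply derivable_pt_lim_integral, continuity_std_gauss.
  - intros x. unfold std_gauss.
    replace (- exp (- s ^ 2 / 2) * (s * exp (- (s * x) ^ 2 / 2)))
      with (- s * (exp (- s ^ 2 / 2) * exp (- (s * x) ^ 2 / 2))) by ring.
    rewrite <- exp_plus. f_equal. f_equal. field.
Qed.

Lemma derivable_pt_lim_integral_std_gauss_sym s :
  derivable_pt_lim (fun s => integral std_gauss (- s) s) s (2 * std_gauss s).
Proof.
  apply derivable_pt_lim_locally_ext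
    with (f := fun s => integral std_gauss 0 s - integral std_gauss 0 (- s)) (a := s - 1) (b := s + 1).
  - lra.
  - intros z _. rewrite <- (integral_Chasles std_gauss 0 (- z) z continuity_std_gauss). ring.
  - apply dpl_val with (std_gauss s - std_gauss (- s) * -1).
    + unfold std_gauss. replace ((- s) ^ 2) with (s ^ 2) by ring. ring.
    + apply dpl_minus; [apply derivable_pt_lim_integral, continuity_std_gauss|].
      apply (dpl_comp (fun s => - s) (fun y => integral std_gauss 0 y) std_gauss).
      * solve_derivative. ring.
      * intros y. apply derivable_pt_lim_integral, continuity_std_gauss.
Qed.

Lemma integral_std_gauss_sym_sqr s :
  (integral std_gauss (- s) s) ^ 2 = 2 * PI - 4 * integral (arctan_kernel s) (-1) 1.
Proof.
  assert (H : (integral std_gauss (- s) s) ^ 2 / 4 + integral (arctan_kernel s) (-1) 1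
              = (integral std_gauss (- 0) 0) ^ 2 / 4 + integral (arctan_kernel 0) (-1) 1).
  { apply (derivative_zero_constant
             (fun s => (integral std_gauss (- s) s) ^ 2 / 4 + integral (arctan_kernel s) (-1) 1)).
    intros x. eapply dpl_val; [|apply dpl_plus; [apply dpl_div_const, dpl_pow2,
      derivable_pt_lim_integral_std_gauss_sym|apply derivable_pt_lim_integral_arctan_kernel]].
    rewrite integral_arctan_kernel_derivative. unfold std_gauss. field. }
  assert (Z : integral std_gauss 0 0 = 0)
    by (pose proof (integral_Chasles std_gauss 0 0 0 continuity_std_gauss); lra).
  rewrite Ropp_0, Z, integral_arctan_kernel_0 in H. lra.
Qed.

Lemma integral_arctan_kernel_bound s :
  Rabs (integral (arctan_kernel s) (-1) 1) <= 2 * exp (- s ^ 2 / 2).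
Proof.
  eapply Rle_trans; [apply (integral_abs_le _ (fun _ => exp (- s ^ 2 / 2)));
    [apply Riemann_integrable_continuity, continuity_arctan_kernel
    |apply Riemann_integrable_continuity; reg|lra|]|].
  - intros x Hx. unfold arctan_kernel. pose proof (one_plus_sqr_pos x).
    pose proof (exp_pos (- s ^ 2 * (1 + x ^ 2) / 2)).
    rewrite Rabs_right by (apply Rle_ge; left; apply Rdiv_lt_0_compat; auto).
    apply Rle_trans with (exp (- s ^ 2 * (1 + x ^ 2) / 2)).
    + unfold Rdiv. rewrite <- (Rmult_1_r (exp _)) at 2. apply Rmult_le_compat_l; [lra|].
      rewrite <- Rinv_1. apply Rinv_le_contravar; [lra|]. pose proof (pow2_ge_0 x); lra.
    + apply exp_le_exp. pose proof (pow2_ge_0 s). pose proof (pow2_ge_0 x). nra.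
  - rewrite (integral_antiderivative (fun t => exp (- s ^ 2 / 2) * t)); [right; ring|reg|].
    intros; solve_derivative; field.
Qed.

Lemma improper_int_Un_cv f l : improper_int f l -> Un_cv (fun n => integral f (- INR n) (INR n)) l.
Proof.
  intros I eps He. destruct (improper_int_elim f l I eps He) as [M [HM HMb]].
  destruct (archimed_cor1 (/ M)) as [N [HN1 HN2]]; [apply Rinv_0_lt_compat; auto|].
  assert (HNM : M < INR N).
  { apply lt_0_INR in HN2. rewrite <- (Rinv_inv M), <- (Rinv_inv (INR N)).
    apply Rinv_lt_contravar; auto. apply Rmult_lt_0_compat; apply Rinv_0_lt_compat; auto. }
  exists N. intros n Hn. apply le_INR in Hn. unfold R_dist. apply HMb; lra.
Qed.

Lemma Un_cv_const c : Un_cv (fun _ => c) c.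
Proof. intros eps He. exists O. intros n _. unfold R_dist. rewrite Rminus_diag, Rabs_R0. lra. Qed.

Lemma arctan_kernel_Un_cv : Un_cv (fun n => integral (arctan_kernel (INR n)) (-1) 1) 0.
Proof.
  intros eps He. destruct (exp_neg_INR_small (2 * exp (1 / 2)) eps He) as [N [_ HN]].
  exists N. intros n Hn. unfold R_dist. rewrite Rminus_0_r.
  eapply Rle_lt_trans; [apply integral_arctan_kernel_bound|].
  eapply Rle_lt_trans; [|exact HN]. rewrite Rmult_assoc. apply Rmult_le_compat_l; [lra|].
  rewrite <- exp_plus. apply exp_le_exp. apply le_INR in Hn.
  pose proof (pow2_ge_0 (INR n - 1)). lra.
Qed.

Lemma gauss_integral : gauss_cos 0 0 = sqrt (2 * PI).
Proof.
  assert (I : improper_int std_gauss (gauss_cos 0 0)).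
  { eapply improper_int_ext; [|apply improper_int_gauss_cos]. intros t.
    unfold gauss_exp, std_gauss. rewrite !Rmult_0_l, cos_0, Rplus_0_r, Rmult_1_r. reflexivity. }
  assert (Hpos : 0 <= gauss_cos 0 0).
  { pose proof (improper_int_abs_le (fun _ => 0) std_gauss 0 _ improper_int_zero I) as H.
    rewrite Rabs_R0 in H. apply H. intros t. rewrite Rabs_R0. left; apply exp_pos. }
  assert (Hsq : gauss_cos 0 0 * gauss_cos 0 0 = 2 * PI - 4 * 0).
  { apply (UL_sequence (fun n => integral std_gauss (- INR n) (INR n)
                                 * integral std_gauss (- INR n) (INR n))).
    - apply CV_mult; apply improper_int_Un_cv, I.
    - eapply Un_cv_ext; [|apply CV_minus, CV_mult; [apply Un_cv_const|apply Un_cv_const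
                                                      |apply arctan_kernel_Un_cv]].
      intros n. cbv beta. rewrite <- integral_std_gauss_sym_sqr. ring. }
  rewrite <- (sqrt_pow2 (gauss_cos 0 0)) by auto. f_equal. lra.
Qed.

(** * Complex Gaussian integrals on R^d *)

Definition C1 : C := mkC 1 0.
Definition Copp (z : C) : C := mkC (- Re z) (- Im z).
Definition Csub (z w : C) : C := Cadd z (Copp w).

Lemma C_ext z w : Re z = Re w -> Im z = Im w -> z = w.
Proof. destruct z, w; simpl; intros; subst; auto. Qed.

Lemma C_ring_theory : ring_theory C0 C1 Cadd Cmul Csub Copp (@eq C).
Proof. constructor; intros; apply C_ext; simpl; ring. Qed.
Add Ring C_ring : C_ring_theory.

Lemma Cexp_add a b : Cexp (Cadd a b) = Cmul (Cexp a) (Cexp b).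
Proof. apply C_ext; simpl; rewrite exp_plus; [rewrite cos_plus|rewrite sin_plus]; ring. Qed.
Lemma Cexp_0 : Cexp C0 = C1.
Proof. apply C_ext; simpl; rewrite ?exp_0, ?cos_0, ?sin_0; ring. Qed.
Lemma Cofr_exp r : Cofr (exp r) = Cexp (Cofr r).
Proof. apply C_ext; simpl; rewrite ?cos_0, ?sin_0; ring. Qed.
Lemma Cofr_add a b : Cofr (a + b) = Cadd (Cofr a) (Cofr b).
Proof. apply C_ext; simpl; ring. Qed.
Lemma Cofr_mul a b : Cofr (a * b) = Cmul (Cofr a) (Cofr b).
Proof. apply C_ext; simpl; ring. Qed.
Lemma Cscale_Cofr r z : Cscale r z = Cmul (Cofr r) z.
Proof. apply C_ext; simpl; ring. Qed.

Lemma Csum_ext n f g : (forall i, (i < n)%nat -> f i = g i) -> Csum_upto n f = Csum_upto n g.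
Proof.
  induction n; simpl; intros H; auto. rewrite IHn by (intros; apply H; lia). rewrite H by lia. auto.
Qed.
Lemma Csum_add n f g : Csum_upto n (fun i => Cadd (f i) (g i)) = Cadd (Csum_upto n f) (Csum_upto n g).
Proof. induction n; simpl; [apply C_ext; simpl; ring|rewrite IHn; ring]. Qed.
Lemma Csum_scal n c f : Csum_upto n (fun i => Cmul c (f i)) = Cmul c (Csum_upto n f).
Proof. induction n; simpl; [apply C_ext; simpl; ring|rewrite IHn; ring]. Qed.
Lemma Cofr_Rsum n f : Cofr (Rsum_upto n f) = Csum_upto n (fun i => Cofr (f i)).
Proof. induction n; simpl; [reflexivity|rewrite Cofr_add, IHn; auto]. Qed.
Lemma Rsum_scal n c f : Rsum_upto n (fun i => c * f i) = c * Rsum_upto n f.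
Proof. induction n; simpl; [ring|rewrite IHn; ring]. Qed.

Lemma improper_intC_plus f g I J : improper_intC f I -> improper_intC g J ->
  improper_intC (fun t => Cadd (f t) (g t)) (Cadd I J).
Proof. intros [] []. split; simpl; apply improper_int_plus; auto. Qed.

Lemma improper_intC_ext f g I : (forall t, f t = g t) -> improper_intC f I -> improper_intC g I.
Proof. intros H. replace g with f; auto. apply functional_extensionality; auto. Qed.

Lemma is_integral_Rd_ext k F G I : (forall y, F y = G y) -> is_integral_Rd k F I -> is_integral_Rd k G I.
Proof. intros H. replace G with F; auto. apply functional_extensionality; auto. Qed.

Lemma is_integral_Rd_plus k : forall F G I J, is_integral_Rd k F I -> is_integral_Rd k G J ->
  is_integral_Rd k (fun y => Cadd (F y) (G y)) (Cadd I J).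
Proof.
  induction k; simpl; intros F G I J H1 H2; [subst; auto|].
  destruct H1 as [G1 [H1a H1b]], H2 as [G2 [H2a H2b]].
  exists (fun t => Cadd (G1 t) (G2 t)). split; [intros t; apply IHk; auto|].
  apply improper_intC_plus; auto.
Qed.

Lemma is_integral_Rd_zero k : is_integral_Rd k (fun _ => C0) C0.
Proof.
  induction k; simpl; auto. exists (fun _ => C0). split; auto.
  split; simpl; apply improper_int_zero.
Qed.

Definition gauss_phase (c : C) (t : R) : C := Cadd (Cofr (- t ^ 2 / 2)) (Cmul c (Cofr t)).

Lemma improper_intC_gauss c K : improper_intC (fun t => Cmul K (Cexp (gauss_phase c t)))
  (Cmul K (Cmul (Cofr (sqrt (2 * PI))) (Cexp (Cmul (Cofr (1/2)) (Cmul c c))))).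
Proof.
  destruct c as [p q], K as [k1 k2].
  destruct (gauss_trig_closed_form p q) as [EC ES]. rewrite gauss_integral in EC, ES.
  pose proof (improper_int_gauss_cos p q) as IC. pose proof (improper_int_gauss_sin p q) as IS.
  assert (Eexp : forall t, Cexp (gauss_phase (mkC p q) t)
                           = mkC (gauss_exp p t * cos (q * t)) (gauss_exp p t * sin (q * t))).
  { intros t. unfold gauss_phase, Cexp, gauss_exp; simpl.
    replace (p * t - q * 0) with (p * t) by ring. replace (0 + (p * 0 + q * t)) with (q * t) by ring.
    reflexivity. }
  set (X := sqrt (2 * PI) * exp ((p ^ 2 - q ^ 2) / 2) * cos (p * q)) in EC.
  set (Y := sqrt (2 * PI) * exp ((p ^ 2 - q ^ 2) / 2) * sin (p * q)) in ES.
  replace (Cmul (mkC k1 k2) (Cmul (Cofr (sqrt (2 * PI))) (Cexp (Cmul (Cofr (1 / 2)) (Cmul (mkC p q) (mkC p q))))))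
    with (mkC (k1 * X + - k2 * Y) (k1 * Y + k2 * X)).
  2: { unfold X, Y. apply C_ext; cbn [Re Im Cmul Cexp Cofr];
       replace (1 / 2 * (p * p - q * q) - 0 * (p * q + q * p)) with ((p ^ 2 - q ^ 2) / 2) by field;
       replace (1 / 2 * (p * q + q * p) + 0 * (p * p - q * q)) with (p * q) by field; ring. }
  apply (improper_intC_ext (fun t => Cmul (mkC k1 k2)
           (mkC (gauss_exp p t * cos (q * t)) (gauss_exp p t * sin (q * t))))); [intros; rewrite Eexp; auto|].
  rewrite <- EC, <- ES. split; cbn [Re Im Cmul].
  - eapply improper_int_ext; [|apply improper_int_lin, IS; apply improper_int_scal, IC].
    intros t. cbv beta. ring.
  - eapply improper_int_ext; [|apply improper_int_lin, IC; apply improper_int_scal, IS].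
    intros t. cbv beta. ring.
Qed.

Definition gauss_phase_sum k (y : nat -> R) (c : nat -> C) : C :=
  Csum_upto k (fun i => gauss_phase (c i) (y i)).
Definition half_sqr_sum k (c : nat -> C) : C :=
  Csum_upto k (fun i => Cmul (Cofr (1/2)) (Cmul (c i) (c i))).

Lemma is_integral_Rd_gauss k : forall K c,
  is_integral_Rd k (fun y => Cmul K (Cexp (gauss_phase_sum k y c)))
    (Cmul K (Cmul (Cofr (sqrt (2 * PI) ^ k)) (Cexp (half_sqr_sum k c)))).
Proof.
  induction k; intros K c.
  - simpl. unfold gauss_phase_sum, half_sqr_sum; simpl. rewrite Cexp_0. change (Cofr 1) with C1. ring.
  - set (V := Cmul (Cofr (sqrt (2 * PI) ^ k)) (Cexp (half_sqr_sum k c))).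
    replace (Cmul K (Cmul (Cofr (sqrt (2 * PI) ^ S k)) (Cexp (half_sqr_sum (S k) c))))
      with (Cmul (Cmul K V) (Cmul (Cofr (sqrt (2 * PI))) (Cexp (Cmul (Cofr (1 / 2)) (Cmul (c k) (c k))))))
      by (unfold V, half_sqr_sum; simpl; rewrite Cexp_add, Cofr_mul; ring).
    exists (fun t => Cmul (Cmul K (Cexp (gauss_phase (c k) t))) V). split.
    + intros t. eapply is_integral_Rd_ext; [|apply IHk]. intros y. cbv beta.
      unfold gauss_phase_sum. simpl. unfold upd at 2. rewrite Nat.eqb_refl.
      rewrite (Csum_ext k (fun i => gauss_phase (c i) (upd y k t i)) (fun i => gauss_phase (c i) (y i))).
      * rewrite Cexp_add. ring.
      * intros i Hi. unfold upd. replace (Nat.eqb i k) with false; auto.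
        symmetry. apply Nat.eqb_neq. lia.
    + eapply improper_intC_ext; [|apply (improper_intC_gauss (c k) (Cmul K V))].
      intros t. cbv beta. ring.
Qed.

(** * The convolution identity *)

(* Exponent of [z |-> e^(z r t - z^2/2 + cq t^2)], one coordinate of a dilated,
   Gaussian-damped exponential. *)
Definition dil_exponent (z : C) (r cq t : R) : C :=
  Cadd (Cmul z (Cofr (r * t))) (Cadd (Cmul (Cofr (-(1/2))) (Cmul z z)) (Cofr (cq * (t * t)))).

Lemma dilgauss_expo d a z w y : 0 < w ->
  dilgauss d (fun x => Cmul a (expo d z x)) w y =
  Cmul a (Cexp (Csum_upto d (fun i => dil_exponent (z i) (/ sqrt w) (- / (2 * w)) (y i)))).
Proof.
  intros Hw. unfold dilgauss, expo, cdot, creal, vscale, rdot.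
  rewrite Cofr_exp.
  replace (- Rsum_upto d (fun i => y i * y i) / (2 * w))
    with (Rsum_upto d (fun i => - / (2 * w) * (y i * y i))) by (rewrite Rsum_scal; field; lra).
  rewrite Cofr_Rsum, Cscale_Cofr, <- Csum_scal.
  match goal with |- Cmul (Cmul a (Cexp (Cadd ?S1 ?S2))) (Cexp ?S3) = _ =>
    transitivity (Cmul a (Cexp (Cadd (Cadd S1 S2) S3))); [rewrite !Cexp_add; ring|] end.
  f_equal. f_equal. rewrite <- !Csum_add. apply Csum_ext. intros i _. unfold dil_exponent. ring.
Qed.

Section CompletingTheSquare.
(* [A = 1/sqrt u] and [B = 1/sqrt v], so [1/u + 1/v = 1] reads [A^2 + B^2 = 1]. *)
Variables (su sv A B : R).
Hypotheses (HA : su * A = 1) (HB : sv * B = 1) (HAB : A * A + B * B = 1).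

Definition conv_center (xi eta : C) (X : R) : C :=
  Cadd (Cmul (Cofr (-(su * B))) xi) (Cadd (Cofr (X * (B * B))) (Cmul (Cofr (sv * A)) eta)).
Definition conv_offset (xi eta : C) (X : R) : C :=
  Cadd (Cmul (Cofr (su * B * X)) xi) (Cadd (Cmul (Cofr (-(su * su) / 2)) (Cmul xi xi))
     (Cadd (Cofr (- (X * X) * (B * B) / 2)) (Cmul (Cofr (- (sv * sv) / 2)) (Cmul eta eta)))).

Lemma dil_exponent_complete_square xi eta X Y :
  Cadd (dil_exponent (Cmul (Cofr su) xi) B (- (B * B) / 2) (X - Y))
       (dil_exponent (Cmul (Cofr sv) eta) A (- (A * A) / 2) Y)
  = Cadd (gauss_phase (conv_center xi eta X) Y) (conv_offset xi eta X).
Proof.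
  destruct xi as [x1 x2], eta as [e1 e2].
  unfold dil_exponent, gauss_phase, conv_center, conv_offset.
  apply C_ext; simpl; field_simplify; try apply (f_equal (fun z => z / 2)); simpl; nsatz.
Qed.

Lemma conv_offset_half_sqr xi eta X :
  Cadd (conv_offset xi eta X) (Cmul (Cofr (1/2)) (Cmul (conv_center xi eta X) (conv_center xi eta X)))
  = dil_exponent (Cadd xi eta) (A * B) (- (A * A * B * B) / 2) X.
Proof.
  destruct xi as [x1 x2], eta as [e1 e2].
  unfold dil_exponent, conv_center, conv_offset.
  apply C_ext; simpl; field_simplify; try apply (f_equal (fun z => z / 2)); simpl; nsatz.
Qed.

End CompletingTheSquare.

Lemma conv_dilgauss_expo d u v (hu : 0 < u) (hv : 0 < v) (huv : / u + / v = 1) a b (xi eta : nat -> C) x :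
  conv_is d (dilgauss d (fun z => Cmul a (expo d (fun i => Cmul (Cofr (sqrt u)) (xi i)) z)) v)
            (dilgauss d (fun z => Cmul b (expo d (fun i => Cmul (Cofr (sqrt v)) (eta i)) z)) u) x
            (dilgauss d (fun z => Cmul (Cmul a b) (expo d (fun i => Cadd (xi i) (eta i)) z)) (u * v) x).
Proof.
  set (su := sqrt u). set (sv := sqrt v).
  assert (Hsu : 0 < su) by (apply sqrt_lt_R0; auto). assert (Hsv : 0 < sv) by (apply sqrt_lt_R0; auto).
  assert (Eu : su * su = u) by (apply sqrt_sqrt; lra). assert (Ev : sv * sv = v) by (apply sqrt_sqrt; lra).
  set (A := / su). set (B := / sv).
  assert (HA : su * A = 1) by (unfold A; field; lra). assert (HB : sv * B = 1) by (unfold B; field; lra).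
  assert (HAB : A * A + B * B = 1) by (rewrite <- huv, <- Eu, <- Ev; unfold A, B; field; lra).
  assert (Cv : - / (2 * v) = - (B * B) / 2) by (rewrite <- Ev; unfold B; field; lra).
  assert (Cu : - / (2 * u) = - (A * A) / 2) by (rewrite <- Eu; unfold A; field; lra).
  assert (Cuv : - / (2 * (u * v)) = - (A * A * B * B) / 2) by (rewrite <- Eu, <- Ev; unfold A, B; field; lra).
  assert (Suv : / sqrt (u * v) = A * B) by (rewrite sqrt_mult by lra; fold su sv; unfold A, B; field; lra).
  set (c := fun i => conv_center su sv A B (xi i) (eta i) (x i)).
  set (offset := Csum_upto d (fun i => conv_offset su sv B (xi i) (eta i) (x i))).
  set (K := Cmul (Cmul a b) (Cexp offset)).
  exists (Cmul K (Cmul (Cofr (sqrt (2 * PI) ^ d)) (Cexp (half_sqr_sum d c)))). split.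
  - eapply is_integral_Rd_ext; [|apply is_integral_Rd_gauss]. intros y. cbv beta.
    rewrite !dilgauss_expo by auto. change (/ sqrt v) with B. change (/ sqrt u) with A.
    rewrite Cv, Cu. unfold K, offset, gauss_phase_sum. symmetry.
    transitivity (Cmul (Cmul a b) (Cexp (Csum_upto d (fun i =>
      Cadd (dil_exponent (Cmul (Cofr su) (xi i)) B (- (B * B) / 2) (vsub x y i))
           (dil_exponent (Cmul (Cofr sv) (eta i)) A (- (A * A) / 2) (y i)))))).
    + rewrite Csum_add, Cexp_add. ring.
    + rewrite (Csum_ext d _ (fun i => Cadd (gauss_phase (c i) (y i)) (conv_offset su sv B (xi i) (eta i) (x i))))
        by (intros i _; unfold c, vsub; apply dil_exponent_complete_square; auto).
      rewrite Csum_add, Cexp_add. ring.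
  - rewrite dilgauss_expo, Suv, Cuv by (apply Rmult_lt_0_compat; auto).
    rewrite (Csum_ext d _ (fun i => Cadd (conv_offset su sv B (xi i) (eta i) (x i))
                                         (Cmul (Cofr (1/2)) (Cmul (c i) (c i)))))
      by (intros i _; symmetry; unfold c; apply conv_offset_half_sqr; auto).
    rewrite Csum_add, Cexp_add. fold offset (half_sqr_sum d c). unfold K. rewrite Cscale_Cofr.
    assert (P : Cmul (Cofr ((/ sqrt (2 * PI)) ^ d)) (Cofr (sqrt (2 * PI) ^ d)) = C1).
    { rewrite <- Cofr_mul, <- Rpow_mult_distr, Rinv_l, pow1; [reflexivity|].
      apply Rgt_not_eq, sqrt_lt_R0. pose proof PI_RGT_0; lra. }
    transitivity (Cmul (Cmul (Cofr ((/ sqrt (2 * PI)) ^ d)) (Cofr (sqrt (2 * PI) ^ d)))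
      (Cmul (Cmul a b) (Cmul (Cexp offset) (Cexp (half_sqr_sum d c))))); [rewrite P|]; ring.
Qed.

Lemma conv_is_plus_l d F1 F2 G x I1 I2 : conv_is d F1 G x I1 -> conv_is d F2 G x I2 ->
  conv_is d (fun z => Cadd (F1 z) (F2 z)) G x (Cadd I1 I2).
Proof.
  intros [J1 [H1 ->]] [J2 [H2 ->]]. exists (Cadd J1 J2). split.
  - eapply is_integral_Rd_ext; [|apply (is_integral_Rd_plus _ _ _ _ _ H1 H2)]. intros y. cbv beta. ring.
  - rewrite !Cscale_Cofr. ring.
Qed.

Lemma conv_is_plus_r d F G1 G2 x I1 I2 : conv_is d F G1 x I1 -> conv_is d F G2 x I2 ->
  conv_is d F (fun z => Cadd (G1 z) (G2 z)) x (Cadd I1 I2).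
Proof.
  intros [J1 [H1 ->]] [J2 [H2 ->]]. exists (Cadd J1 J2). split.
  - eapply is_integral_Rd_ext; [|apply (is_integral_Rd_plus _ _ _ _ _ H1 H2)]. intros y. cbv beta. ring.
  - rewrite !Cscale_Cofr. ring.
Qed.

Lemma conv_is_zero_l d G x : conv_is d (fun _ => C0) G x C0.
Proof.
  exists C0. split; [|rewrite Cscale_Cofr; ring].
  eapply is_integral_Rd_ext; [|apply is_integral_Rd_zero]. intros y. cbv beta. ring.
Qed.

Lemma conv_is_zero_r d F x : conv_is d F (fun _ => C0) x C0.
Proof.
  exists C0. split; [|rewrite Cscale_Cofr; ring].
  eapply is_integral_Rd_ext; [|apply is_integral_Rd_zero]. intros y. cbv beta. ring.
Qed.

Lemma dilgauss_plus d f1 f2 w :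
  dilgauss d (fun z => Cadd (f1 z) (f2 z)) w = fun y => Cadd (dilgauss d f1 w y) (dilgauss d f2 w y).
Proof. apply functional_extensionality. intros y. unfold dilgauss. ring. Qed.

Lemma dilgauss_nil d w : dilgauss d (evalE d nil) w = fun _ => C0.
Proof. apply functional_extensionality. intros y. unfold dilgauss, evalE. simpl. ring. Qed.

Lemma evalE_cons d p l : evalE d (p :: l) = fun z => Cadd (Cmul (fst p) (expo d (snd p) z)) (evalE d l z).
Proof. reflexivity. Qed.

Lemma evalE_app d l1 l2 : evalE d (l1 ++ l2) = fun z => Cadd (evalE d l1 z) (evalE d l2 z).
Proof.
  apply functional_extensionality. intros z. induction l1 as [|p l1 IH].
  - unfold evalE; simpl. ring.
  - change ((p :: l1) ++ l2) with (p :: (l1 ++ l2)). rewrite !evalE_cons. cbv beta. rewrite IH. ring.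
Qed.

Section Bilinearity.
Variables (d : nat) (u v : R).
Hypotheses (hu : 0 < u) (hv : 0 < v) (huv : / u + / v = 1).

Lemma conv_dilgauss_expo_evalE a xi psi x :
  conv_is d (dilgauss d (fun z => Cmul a (expo d (fun i => Cmul (Cofr (sqrt u)) (xi i)) z)) v)
            (dilgauss d (evalE d (GammaE (Cofr (sqrt v)) psi)) u) x
            (dilgauss d (evalE d (map (fun q => (Cmul a (fst q), fun i => Cadd (xi i) (snd q i))) psi))
               (u * v) x).
Proof.
  induction psi as [|[b eta] psi IH].
  - simpl. rewrite !dilgauss_nil. apply conv_is_zero_r.
  - simpl. rewrite !evalE_cons, !dilgauss_plus. apply conv_is_plus_r; auto.
    apply conv_dilgauss_expo; auto.
Qed.

Lemma conv_dilgauss_GammaE_wick phi psi x :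
  conv_is d (dilgauss d (evalE d (GammaE (Cofr (sqrt u)) phi)) v)
            (dilgauss d (evalE d (GammaE (Cofr (sqrt v)) psi)) u) x
            (dilgauss d (evalE d (wick phi psi)) (u * v) x).
Proof.
  induction phi as [|[a xi] phi IH].
  - simpl. unfold wick; simpl. rewrite !dilgauss_nil. apply conv_is_zero_l.
  - simpl. unfold wick; simpl. fold (wick phi psi).
    rewrite evalE_app, !evalE_cons, !dilgauss_plus. apply conv_is_plus_l; auto.
    apply conv_dilgauss_expo_evalE.
Qed.

End Bilinearity.

Lemma GammaE_comp_inv c c' phi : Cmul c c' = C1 -> GammaE c (GammaE c' phi) = phi.
Proof.
  intros H. induction phi as [|[a xi] phi IH]; simpl; auto. rewrite IH. f_equal. f_equal.
  apply functional_extensionality. intros i.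
  transitivity (Cmul (Cmul c c') (xi i)); [ring|]. rewrite H. ring.
Qed.

Lemma Cofr_sqrt_mul_inv w : 0 < w -> Cmul (Cofr (sqrt w)) (Cofr (/ sqrt w)) = C1.
Proof.
  intros Hw. rewrite <- Cofr_mul, Rinv_r; [reflexivity|]. apply Rgt_not_eq, sqrt_lt_R0; auto.
Qed.

Theorem lemma3p2 (d : nat) (hd : (1 <= d)%nat) (u v : R)
  (hu : 0 < u) (hv : 0 < v) (huv : / u + / v = 1) :
  (forall (phi psi : Exps) (x : nat -> R),
     conv_is d
       (dilgauss d (evalE d (GammaE (Cofr (sqrt u)) phi)) v)
       (dilgauss d (evalE d (GammaE (Cofr (sqrt v)) psi)) u)
       x
       (dilgauss d (evalE d (wick phi psi)) (u * v) x))
  /\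
  (forall (phi psi : Exps) (x : nat -> R),
     conv_is d
       (dilgauss d (evalE d phi) v)
       (dilgauss d (evalE d psi) u)
       x
       (dilgauss d (evalE d (wick (GammaE (Cofr (/ sqrt u)) phi)
                                  (GammaE (Cofr (/ sqrt v)) psi))) (u * v) x)).
Proof.
  split; [apply conv_dilgauss_GammaE_wick; auto|].
  intros phi psi x.
  pose proof (conv_dilgauss_GammaE_wick d u v hu hv huv
                (GammaE (Cofr (/ sqrt u)) phi) (GammaE (Cofr (/ sqrt v)) psi) x) as P.
  rewrite !GammaE_comp_inv in P by (apply Cofr_sqrt_mul_inv; auto). exact P.
Qed.
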